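(* Let $0<\mu\le L$, $f\in\mathcal S^1_{\mu,L}(\mathbb R^n)$ with minimizer $x^*$, $\beta\in[0,1]$, and $s>0$ with $\mu s<1$. Let $(x_k)$, $(v_k)$ and $\mathcal E_\beta(k)$ be as in the context. Then for every $k\ge0$, $$\mathcal E_\beta(k)\le\left(\frac{1}{1-\sqrt{\mu s}}+\frac{\beta^2Ls}{2}\right)\big(f(x_k)-f(x^* )\big)+\frac{1+\sqrt{\mu s}+\mu s}{(1-\sqrt{\mu s})^2}\|v_k\|^2+\frac{3\mu}{(1-\sqrt{\mu s})^2}\|x_k-x^*\|^2$$ $$\qquad+\frac{\sqrt{\mu s}}{1-\sqrt{\mu s}}\left[f(x_k)-f(x^* )-\frac{\beta^2s\sqrt{\mu s}-(\beta^2-\beta)s}{2\sqrt{\mu s}}\|\nabla f(x_k)\|^2\right].$$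
   Context: $\mathcal S^1_{\mu,L}(\mathbb R^n)$: differentiable, $\mu$-strongly convex $f:\mathbb R^n\to\mathbb R$ (i.e. $f(y)\ge f(x)+\langle\nabla f(x),y-x\rangle+\frac\mu2\|y-x\|^2$) with $L$-Lipschitz gradient. The sequence: $x_0\in\mathbb R^n$, $x_1=x_0-\frac{2s\nabla f(x_0)}{1+\sqrt{\mu s}}$, and for $k\ge1$, $x_{k+1}=x_k+\frac{1-\sqrt{\mu s}}{1+\sqrt{\mu s}}(x_k-x_{k-1})-s\nabla f(x_k)-\beta\frac{1-\sqrt{\mu s}}{1+\sqrt{\mu s}}s(\nabla f(x_k)-\nabla f(x_{k-1}))$. Velocities $v_k=\frac{x_{k+1}-x_k}{\sqrt s}$. Discrete energy: $$\mathcal E_\beta(k)=\frac{1+\sqrt{\mu s}}{1-\sqrt{\mu s}}\big(f(x_k)-f(x^* )\big)+\frac14\|v_k\|^2+\frac14\Big\|v_k+\frac{2\sqrt\mu}{1-\sqrt{\mu s}}(x_k-x^* )+\beta\sqrt s\,\nabla f(x_k)\Big\|^2-\frac{\beta s\|\nabla f(x_k)\|^2}{2(1-\sqrt{\mu s})}.$$ *)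

From HB Require Import structures.
From mathcomp Require Import all_boot all_order all_algebra.
From mathcomp Require Import all_classical all_reals all_analysis.
Set Implicit Arguments. Unset Strict Implicit. Unset Printing Implicit Defensive.
Import Order.TTheory GRing.Theory Num.Theory.
Import numFieldNormedType.Exports.
Local Open Scope ring_scope.

Definition dotv {R : realType} {n : nat} (u v : 'rV[R]_n) : R := (u *m v^T) 0 0.
Definition enorm {R : realType} {n : nat} (u : 'rV[R]_n) : R := Num.sqrt (dotv u u).

Definition is_gradient {R : realType} {n : nat} (f : 'rV[R]_n -> R)
  (grad : 'rV[R]_n -> 'rV[R]_n) : Prop :=
  forall x, differentiable f x /\ forall h, 'd f x h = dotv (grad x) h.

Definition strongly_convex_Lsmooth {R : realType} {n : nat} (mu L : R)
  (f : 'rV[R]_n -> R) (grad : 'rV[R]_n -> 'rV[R]_n) : Prop :=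
  is_gradient f grad /\
  (forall x y, f y >= f x + dotv (grad x) (y - x) + mu / 2 * enorm (y - x) ^+ 2) /\
  (forall x y, enorm (grad x - grad y) <= L * enorm (x - y)).

Definition is_iter {R : realType} {n : nat} (mu s beta : R)
  (grad : 'rV[R]_n -> 'rV[R]_n) (x : nat -> 'rV[R]_n) : Prop :=
  let r := Num.sqrt (mu * s) in
  let c := (1 - r) / (1 + r) in
  x 1%N = x 0%N - (2 * s / (1 + r)) *: grad (x 0%N) /\
  forall k : nat,
    x k.+2 = x k.+1 + c *: (x k.+1 - x k) - s *: grad (x k.+1)
             - (beta * c * s) *: (grad (x k.+1) - grad (x k)).

Definition velocity {R : realType} {n : nat} (s : R) (x : nat -> 'rV[R]_n) (k : nat)
  : 'rV[R]_n := (Num.sqrt s)^-1 *: (x k.+1 - x k).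

Definition energy {R : realType} {n : nat} (mu s beta : R) (f : 'rV[R]_n -> R)
  (grad : 'rV[R]_n -> 'rV[R]_n) (xstar : 'rV[R]_n) (x : nat -> 'rV[R]_n) (k : nat) : R :=
  let r := Num.sqrt (mu * s) in
  let v := velocity s x k in
  (1 + r) / (1 - r) * (f (x k) - f xstar)
  + 1 / 4 * enorm v ^+ 2
  + 1 / 4 * enorm (v + (2 * Num.sqrt mu / (1 - r)) *: (x k - xstar)
                     + (beta * Num.sqrt s) *: grad (x k)) ^+ 2
  - beta * s * enorm (grad (x k)) ^+ 2 / (2 * (1 - r)).

From HB Require Import structures.
From mathcomp Require Import all_boot all_order all_algebra.
From mathcomp Require Import all_classical all_reals all_analysis.
From mathcomp Require Import ring lra.
Import Order.TTheory GRing.Theory Num.Theory.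
Import numFieldNormedType.Exports.
Local Open Scope classical_set_scope.
Local Open Scope ring_scope.

(* An L-Lipschitz gradient makes the step of length 1/L decrease f by at least
   |grad f x|^2 / (2 L), so |grad f (x_k)|^2 <= 2 L (f (x_k) - f x* ).  Bounding the
   third square of the energy by |a + b + c|^2 <= 3 (|a|^2 + |b|^2 + |c|^2), the
   difference of the two sides becomes a nonnegative combination of
   2 L (f (x_k) - f x* ) - |grad f (x_k)|^2, |v_k|^2 and the slack of that
   three-term inequality. *)

Section EuclideanNorm.
Context {R : realType} {n : nat}.
Implicit Types u v w : 'rV[R]_n.

Lemma dotvE u v : dotv u v = \sum_j u 0 j * v 0 j.
Proof. by rewrite /dotv !mxE; apply: eq_bigr => j _; rewrite !mxE. Qed.

Lemma dotvC u v : dotv u v = dotv v u.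
Proof. by rewrite !dotvE; apply: eq_bigr => j _; rewrite mulrC. Qed.

Lemma dotvDl u v w : dotv (u + v) w = dotv u w + dotv v w.
Proof. by rewrite !dotvE -big_split; apply: eq_bigr => j _; rewrite !mxE mulrDl. Qed.

Lemma dotvZl (c : R) u w : dotv (c *: u) w = c * dotv u w.
Proof. by rewrite !dotvE mulr_sumr; apply: eq_bigr => j _; rewrite !mxE mulrA. Qed.

Lemma dotvNl u w : dotv (- u) w = - dotv u w.
Proof. by rewrite -scaleN1r dotvZl mulN1r. Qed.

Lemma dotvDr u v w : dotv w (u + v) = dotv w u + dotv w v.
Proof. by rewrite dotvC dotvDl !(dotvC w). Qed.

Lemma dotvZr (c : R) u w : dotv w (c *: u) = c * dotv w u.
Proof. by rewrite dotvC dotvZl dotvC. Qed.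

Lemma dotvNr u w : dotv w (- u) = - dotv w u.
Proof. by rewrite dotvC dotvNl dotvC. Qed.

Lemma dotv_ge0 u : 0 <= dotv u u.
Proof. by rewrite dotvE; apply: sumr_ge0 => j _; rewrite -expr2 sqr_ge0. Qed.

Lemma sqr_enorm u : enorm u ^+ 2 = dotv u u.
Proof. by rewrite /enorm sqr_sqrtr // dotv_ge0. Qed.

Lemma enorm_ge0 u : 0 <= enorm u.
Proof. exact: sqrtr_ge0. Qed.

Lemma sqr_enormZ (c : R) u : enorm (c *: u) ^+ 2 = c ^+ 2 * enorm u ^+ 2.
Proof. by rewrite !sqr_enorm dotvZl dotvZr mulrA -expr2. Qed.

Lemma enormZ (c : R) u : enorm (c *: u) = `|c| * enorm u.
Proof.
apply: (@pexpIrn _ 2) => //; rewrite ?nnegrE ?mulr_ge0 ?enorm_ge0 //.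
by rewrite sqr_enormZ exprMn real_normK ?num_real.
Qed.

Lemma dotv_le_of_enorm_le (k : R) u v :
  0 < k -> enorm u <= k * enorm v -> dotv u v <= k * enorm v ^+ 2.
Proof.
move=> k_gt0 uv.
have uu : dotv u u <= k ^+ 2 * dotv v v.
  rewrite -!sqr_enorm -exprMn; apply: lerXn2r => //;
    by rewrite nnegrE ?mulr_ge0 ?enorm_ge0 ?ltW.
have := dotv_ge0 (u - k *: v).
rewrite sqr_enorm !(dotvDl, dotvDr, dotvNl, dotvNr, dotvZl, dotvZr) (dotvC v u).
by nra.
Qed.

Lemma sqr_enormD3_le u v w :
  enorm (u + v + w) ^+ 2 <= 3 * (enorm u ^+ 2 + enorm v ^+ 2 + enorm w ^+ 2).
Proof.
have := dotv_ge0 (u - v); have := dotv_ge0 (u - w); have := dotv_ge0 (v - w).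
rewrite !sqr_enorm !(dotvDl, dotvDr, dotvNl, dotvNr) (dotvC v u) (dotvC w u) (dotvC w v).
by lra.
Qed.

End EuclideanNorm.

Section DescentLemma.
Variables (R : realType) (n : nat) (L : R).
Variables (f : 'rV[R]_n -> R) (grad : 'rV[R]_n -> 'rV[R]_n).
Hypothesis L_gt0 : 0 < L.
Hypothesis f_grad : is_gradient f grad.
Hypothesis grad_lipschitz : forall x y, enorm (grad x - grad y) <= L * enorm (x - y).

Lemma is_derive_line (x h : 'rV[R]_n) (t : R) :
  is_derive t 1 (fun s => f (x + s *: h)) (dotv (grad (x + t *: h)) h).
Proof.
have quot_eq : (fun e : R => e^-1 *: (((fun s => f (x + s *: h)) \o shift t) (e *: 1)
                                      - f (x + t *: h)))
             = (fun e : R => e^-1 *: ((f \o shift (x + t *: h)) (e *: h) - f (x + t *: h))).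
  apply/funext => e /=; congr (_ *: (f _ - _)).
  by rewrite [e%:A]mulr1 scalerDl addrCA addrA.
have [fdiff dfE] := f_grad (x + t *: h).
apply: DeriveDef; first by rewrite /derivable quot_eq; exact: diff_derivable.
have -> : derive (fun s : R => f (x + s *: h)) t 1 = derive f (x + t *: h) h.
  by rewrite /derive quot_eq.
by rewrite deriveE.
Qed.

(* Mean value theorem for [psi t = f (x - t g) + |g|^2 t - L |g|^2 t^2 / 2]: the
   Lipschitz bound makes [psi' <= 0] on [(0, 1/L)], hence [psi (1/L) <= psi 0]. *)
Lemma descent_gradient_step x :
  f (x - L^-1 *: grad x) <= f x - enorm (grad x) ^+ 2 / (2 * L).
Proof.
set g := grad x; set D := enorm g ^+ 2.
pose phi s := f (x + s *: - g).
pose dpsi t := dotv (grad (x + t *: - g)) (- g) + D - L * D / 2 * (2 * t).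
pose psi : R -> R := phi + D *: id - (L * D / 2) *: id ^+ 2.
have psi_derive (t : R) : is_derive t 1 psi (dpsi t).
  have phi_derive := is_derive_line x (- g) t.
  apply: is_derive_eq.
  by rewrite expr1 /= /GRing.scale /= !mulr1.
have psi_cont : {within `[0, L^-1], continuous psi}.
  by apply: derivable_within_continuous => t _; case: (psi_derive t).
have invL_gt0 : 0 < L^-1 by rewrite invr_gt0.
have [c c_in psi_mvt] := MVT invL_gt0 (fun t _ => psi_derive t) psi_cont.
have c_gt0 : 0 < c by move: c_in; rewrite in_itv /= => /andP[].
have dpsi_le0 : dpsi c <= 0.
  have lip : enorm (g - grad (x + c *: - g)) <= L * c * enorm g.
    apply: (le_trans (grad_lipschitz _ _)).
    by rewrite opprD addNKr scalerN opprK enormZ (gtr0_norm c_gt0) mulrA.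
  have := dotv_le_of_enorm_le _ _ _ (mulr_gt0 L_gt0 c_gt0) lip.
  rewrite /dpsi dotvNr dotvDl dotvNl -sqr_enorm -/D.
  by nra.
have psi_le : psi L^-1 <= psi 0.
  by rewrite -subr_le0 psi_mvt subr0 mulr_le0_ge0 // ltW.
have psiE t : psi t = f (x - t *: g) + D * t - L * D / 2 * (t * t).
  by rewrite -scalerN.
have psi0 : psi 0 = f x by rewrite psiE scale0r subr0; ring.
have psiL : psi L^-1 = f (x - L^-1 *: g) + D / (2 * L).
  by rewrite psiE; field; exact: lt0r_neq0.
by move: psi_le; rewrite psi0 psiL; lra.
Qed.

Lemma sqr_enorm_grad_le (xstar x : 'rV[R]_n) : (forall y, f xstar <= f y) ->
  enorm (grad x) ^+ 2 <= 2 * L * (f x - f xstar).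
Proof.
move=> xstar_min; have := descent_gradient_step x.
have := xstar_min (x - L^-1 *: grad x).
rewrite -ler_pdivrMl ?mulr_gt0 // mulrC.
by lra.
Qed.

End DescentLemma.

Lemma energy_bound_real {R : realFieldType} (mu s L beta r F vv dd gg W : R) :
  0 < r -> r < 1 -> r ^+ 2 = mu * s -> 0 <= s -> 0 <= vv ->
  gg <= 2 * L * F ->
  W <= 3 * (vv + 4 * mu / (1 - r) ^+ 2 * dd + beta ^+ 2 * s * gg) ->
  (1 + r) / (1 - r) * F + 1 / 4 * vv + 1 / 4 * W - beta * s * gg / (2 * (1 - r))
  <= (1 / (1 - r) + beta ^+ 2 * L * s / 2) * F + (1 + r + mu * s) / (1 - r) ^+ 2 * vv
     + 3 * mu / (1 - r) ^+ 2 * dd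
     + r / (1 - r) * (F - (beta ^+ 2 * s * r - (beta ^+ 2 - beta) * s) / (2 * r) * gg).
Proof.
move=> r_gt0 r_lt1 r_sqr s_ge0 vv_ge0 gg_le W_le.
have r1_gt0 : 0 < 1 - r by rewrite subr_gt0.
rewrite -subr_ge0 -r_sqr.
set lhs := (_ - _).
have -> : lhs = beta ^+ 2 * s / 4 * (2 * L * F - gg) + 3 * r / (1 - r) ^+ 2 * vv
    + 1 / 4 * (3 * (vv + 4 * mu / (1 - r) ^+ 2 * dd + beta ^+ 2 * s * gg) - W).
  by rewrite /lhs; field; rewrite ?lt0r_neq0.
have beta_s_ge0 : 0 <= beta ^+ 2 * s / 4.
  by apply: divr_ge0 => //; apply: mulr_ge0 => //; exact: sqr_ge0.
have r_coef_ge0 : 0 <= 3 * r / (1 - r) ^+ 2.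
  by apply: divr_ge0; [apply: mulr_ge0 => //; exact: ltW | exact: sqr_ge0].
have gap_ge0 : 0 <= 2 * L * F - gg by rewrite subr_ge0.
have W_gap_ge0 : 0 <= 3 * (vv + 4 * mu / (1 - r) ^+ 2 * dd + beta ^+ 2 * s * gg) - W.
  by rewrite subr_ge0.
by apply: addr_ge0; first apply: addr_ge0; apply: mulr_ge0.
Qed.

Theorem lemma5p1 (R : realType) (n : nat) (mu L beta s : R)
  (f : 'rV[R]_n -> R) (grad : 'rV[R]_n -> 'rV[R]_n) (xstar : 'rV[R]_n)
  (x : nat -> 'rV[R]_n) :
  0 < mu -> mu <= L ->
  strongly_convex_Lsmooth mu L f grad ->
  (forall y, f xstar <= f y) ->
  0 <= beta -> beta <= 1 ->
  0 < s -> mu * s < 1 ->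
  is_iter mu s beta grad x ->
  forall k : nat,
    let r := Num.sqrt (mu * s) in
    energy mu s beta f grad xstar x k <=
      (1 / (1 - r) + beta ^+ 2 * L * s / 2) * (f (x k) - f xstar)
      + (1 + r + mu * s) / (1 - r) ^+ 2 * enorm (velocity s x k) ^+ 2
      + 3 * mu / (1 - r) ^+ 2 * enorm (x k - xstar) ^+ 2
      + r / (1 - r) * (f (x k) - f xstar
          - (beta ^+ 2 * s * r - (beta ^+ 2 - beta) * s) / (2 * r)
            * enorm (grad (x k)) ^+ 2).
Proof.
move=> mu_gt0 mu_le_L [f_grad [_ grad_lip]] xstar_min _ _ s_gt0 mus_lt1 _ k /=.
set r := Num.sqrt (mu * s).
have L_gt0 : 0 < L := lt_le_trans mu_gt0 mu_le_L.
have r_sqr : r ^+ 2 = mu * s by rewrite sqr_sqrtr // ltW ?mulr_gt0.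
have r_gt0 : 0 < r by rewrite sqrtr_gt0 mulr_gt0.
have r_lt1 : r < 1 by move: mus_lt1; rewrite -r_sqr expr_lt1 // ltW.
apply: energy_bound_real (ltW s_gt0) (sqr_ge0 _) _ _ => //.
  exact: sqr_enorm_grad_le.
apply: le_trans (sqr_enormD3_le _ _ _) _.
have coef_d : (2 * Num.sqrt mu / (1 - r)) ^+ 2 = 4 * mu / (1 - r) ^+ 2.
  by rewrite expr_div_n exprMn sqr_sqrtr ?(ltW mu_gt0) // -natrX.
have coef_g : (beta * Num.sqrt s) ^+ 2 = beta ^+ 2 * s.
  by rewrite exprMn sqr_sqrtr ?(ltW s_gt0).
rewrite (sqr_enormZ (2 * _ / _)) (sqr_enormZ (beta * _)) coef_d coef_g -/r.
exact: lexx.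
Qed.
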